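(* Let $J\in\mathbb{S}$ and let $\Omega$ be a domain in $L_J$, symmetric with respect to the real axis and such that $\Omega\cap\mathbb{R}\neq\emptyset$. Let $\widetilde\Omega=\bigcup_{x+yJ\in\Omega}(x+y\mathbb{S})$ be its symmetric completion. Let $f:\Omega\to L_J$ be a holomorphic function and let $\tilde f:\widetilde\Omega\to\mathbb{H}$ be its (unique) regular extension. If $\tilde f(x_0+y_0J)=0$ with $y_0\neq0$, then $\tilde f(x_0+y_0L)=0$ for all $L\in\mathbb{S}$ if and only if $f(x_0+y_0J)=f(x_0-y_0J)=0$.
   Context: $\mathbb{H}$ denotes the quaternions, $\mathbb{S}=\{q\in\mathbb{H}: \mathrm{Re}(q)=0,\ |\mathrm{Im}(q)|=1\}$ the 2-sphere of imaginary units, $L_I=\mathbb{R}+\mathbb{R}I$ for $I\in\mathbb{S}$, and $x+y\mathbb{S}=\{x+yL:L\in\mathbb{S}\}$. A function $\Omega\to L_J$ is holomorphic if it is holomorphic under the identification $L_J\cong\mathbb{C}$, $x+yJ\mapsto x+iy$. A function $g:U\to\mathbb{H}$ on an open set $U\subseteq\mathbb{H}$ is (slice left) regular if for every $I\in\mathbb{S}$ its restriction to $U\cap L_I$ has continuous partial derivatives and satisfies $\left(\frac{\partial}{\partial x}+I\frac{\partial}{\partial y}\right)g(x+yI)=0$ there. The regular extension of $f$ is $\tilde f(x+yI)=\frac12[f(x+yJ)+f(x-yJ)]+I\frac12[J(f(x-yJ)-f(x+yJ))]$, the unique regular function on $\widetilde\Omega$ agreeing with $f$ on $\Omega$. *)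

From HB Require Import structures.
From mathcomp Require Import all_boot all_order all_algebra.
From mathcomp Require Import all_classical all_reals all_analysis.
Set Implicit Arguments. Unset Strict Implicit. Unset Printing Implicit Defensive.
Import Order.TTheory GRing.Theory Num.Theory.
Import numFieldNormedType.Exports.
Local Open Scope classical_set_scope.
Local Open Scope ring_scope.

(** Real quaternions q = q0 + q1 i + q2 j + q3 k over a real field R. *)
Record quat (R : realType) := Quat { q0 : R; q1 : R; q2 : R; q3 : R }.
Arguments Quat {R}.

Section Quaternions.
Variable R : realType.
Implicit Types (p q : quat R) (r x y : R).

Definition qzero : quat R := Quat 0 0 0 0.
Definition qreal r : quat R := Quat r 0 0 0.
Definition qadd p q : quat R :=
  Quat (q0 p + q0 q) (q1 p + q1 q) (q2 p + q2 q) (q3 p + q3 q).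
Definition qopp q : quat R := Quat (- q0 q) (- q1 q) (- q2 q) (- q3 q).
Definition qsub p q := qadd p (qopp q).
Definition qscale r q : quat R := Quat (r * q0 q) (r * q1 q) (r * q2 q) (r * q3 q).
Definition qmul p q : quat R :=
  Quat (q0 p * q0 q - q1 p * q1 q - q2 p * q2 q - q3 p * q3 q)
       (q0 p * q1 q + q1 p * q0 q + q2 p * q3 q - q3 p * q2 q)
       (q0 p * q2 q - q1 p * q3 q + q2 p * q0 q + q3 p * q1 q)
       (q0 p * q3 q + q1 p * q2 q - q2 p * q1 q + q3 p * q0 q).

Definition imag_unit q : Prop :=
  q0 q = 0 /\ q1 q ^+ 2 + q2 q ^+ 2 + q3 q ^+ 2 = 1.

Definition slice (J : quat R) x y : quat R := qadd (qreal x) (qscale y J).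

(** Complex multiplication on R * R (identified with C: (a,b) = a + ib). *)
Definition cmul (z w : R * R) : R * R :=
  (z.1 * w.1 - z.2 * w.2, z.1 * w.2 + z.2 * w.1).

Definition holomorphic_on (D : set (R * R)) (g : R * R -> R * R) : Prop :=
  forall z, D z -> exists l : R * R, forall e : R, 0 < e ->
    \forall h \near (0 : R * R), `|g (z + h) - g z - cmul l h| <= e * `|h|.

(** The regular extension of f (given on L_J), by the representation formula
    ftilde(x + y I) = 1/2 [f(x+yJ) + f(x-yJ)] + I 1/2 [J (f(x-yJ) - f(x+yJ))].
    For q with real part x and imaginary part v, y := |v| and I := v / y
    (when v = 0 the formula reduces to f(x), and I := 0 is harmless). *)
Definition regular_ext (J : quat R) (f : quat R -> quat R) (q : quat R) : quat R :=
  let x := q0 q in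
  let y := Num.sqrt (q1 q ^+ 2 + q2 q ^+ 2 + q3 q ^+ 2) in
  let I := qscale y^-1 (Quat 0 (q1 q) (q2 q) (q3 q)) in
  let a := f (slice J x y) in
  let b := f (slice J x (- y)) in
  qadd (qscale (2^-1) (qadd a b))
       (qmul I (qscale (2^-1) (qmul J (qsub b a)))).

End Quaternions.

From HB Require Import structures.
From mathcomp Require Import all_boot all_order all_algebra.
From mathcomp Require Import all_classical all_reals all_analysis.
From mathcomp Require Import ring.
Import Order.TTheory GRing.Theory Num.Theory.
Import numFieldNormedType.Exports.
Local Open Scope classical_set_scope.
Local Open Scope ring_scope.

(** On the slice [L_J] the representation formula gives back
    [f] itself, so [ftilde(x0 + y0 (-J)) = f(x0 - y0 J)]; hence if [ftilde]
    vanishes on the whole sphere [x0 + y0 S] then [f(x0 +- y0 J) = 0].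
    Conversely, for any [L] in [S] the formula expresses [ftilde(x0 + y0 L)]
    linearly in [f(x0 + y0 J)] and [f(x0 - y0 J)], so it vanishes with them. *)

Section RepresentationFormula.
Variable R : realType.
Implicit Types (a b d p q I J L : quat R) (s x y : R) (f : quat R -> quat R).

Lemma quat_ext p q :
  q0 p = q0 q -> q1 p = q1 q -> q2 p = q2 q -> q3 p = q3 q -> p = q.
Proof. by case: p; case: q => /= ????????; do 4!move=> ->. Qed.

Definition rep_formula J a b I : quat R :=
  qadd (qscale 2^-1 (qadd a b)) (qmul I (qscale 2^-1 (qmul J (qsub b a)))).

Lemma rep_formula0 J I : rep_formula J (qzero R) (qzero R) I = qzero R.
Proof. by apply: quat_ext => /=; ring. Qed.

Lemma mul_imag_unitK J d : imag_unit J -> qmul J (qmul J d) = qopp d.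
Proof.
case=> J0 J1.
have -> : qmul J (qmul J d)
        = qscale (- (q1 J ^+ 2 + q2 J ^+ 2 + q3 J ^+ 2)) d.
  by apply: quat_ext; rewrite /= J0; ring.
by rewrite J1; apply: quat_ext => /=; ring.
Qed.

Lemma rep_formula_scale J a b s : imag_unit J ->
  rep_formula J a b (qscale s J) =
  qadd (qscale ((1 + s) / 2) a) (qscale ((1 - s) / 2) b).
Proof.
move=> HJ; rewrite /rep_formula.
have -> : qmul (qscale s J) (qscale 2^-1 (qmul J (qsub b a)))
        = qscale (s / 2) (qmul J (qmul J (qsub b a))).
  by apply: quat_ext => /=; ring.
by rewrite mul_imag_unitK //; apply: quat_ext => /=; ring.
Qed.

Lemma regular_ext_slice J f L x y : imag_unit L ->
  regular_ext J f (slice L x y) =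
  rep_formula J (f (slice J x `|y|)) (f (slice J x (- `|y|)))
                (qscale (`|y|^-1 * y) L).
Proof.
case=> L0 L1; rewrite /regular_ext.
have -> : q0 (slice L x y) = x by rewrite /= L0 mulr0 addr0.
have -> : Num.sqrt (q1 (slice L x y) ^+ 2 + q2 (slice L x y) ^+ 2
                    + q3 (slice L x y) ^+ 2) = `|y|.
  have -> : q1 (slice L x y) ^+ 2 + q2 (slice L x y) ^+ 2 + q3 (slice L x y) ^+ 2
          = y ^+ 2 * (q1 L ^+ 2 + q2 L ^+ 2 + q3 L ^+ 2) by rewrite /=; ring.
  by rewrite L1 mulr1 sqrtr_sqr.
rewrite /rep_formula; congr qadd; congr qmul.
by apply: quat_ext; rewrite /= ?L0; ring.
Qed.

Lemma slice_oppr L x y : slice (qopp L) x y = slice L x (- y).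
Proof. by apply: quat_ext => /=; ring. Qed.

Lemma regular_ext_agrees J f x y : imag_unit J ->
  regular_ext J f (slice J x y) = f (slice J x y).
Proof.
move=> HJ; rewrite regular_ext_slice // rep_formula_scale //.
have [y_lt0|y_gt0|->] := ltrgtP y 0.
- rewrite ltr0_norm // invrN mulNr mulVf ?(lt_eqF y_lt0) // !opprK.
  by apply: quat_ext => /=; field.
- rewrite gtr0_norm // mulVf ?(gt_eqF y_gt0) //.
  by apply: quat_ext => /=; field.
- by rewrite normr0 oppr0 mulr0; apply: quat_ext => /=; field.
Qed.

Lemma regular_ext_sphere_eq0 J f L x y : imag_unit L ->
  f (slice J x y) = qzero R -> f (slice J x (- y)) = qzero R ->
  regular_ext J f (slice L x y) = qzero R.
Proof.
move=> HL fy fNy; rewrite regular_ext_slice //.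
have [y_ge0|y_lt0] := leP 0 y.
- by rewrite ger0_norm // fy fNy rep_formula0.
- by rewrite ltr0_norm // opprK fy fNy rep_formula0.
Qed.

Lemma imag_unit_opp L : imag_unit L -> imag_unit (qopp L).
Proof. by case=> L0 L1; split; rewrite /= ?L0 ?oppr0 // -L1; ring. Qed.

End RepresentationFormula.

Theorem proposition5p2 (R : realType) (J : quat R) (Omega : set (quat R))
  (f : quat R -> quat R) (x0 y0 : R) :
  imag_unit J ->
  (* Omega is contained in L_J *)
  (forall q, Omega q -> exists x y : R, q = slice J x y) ->
  (* Omega is a domain of L_J ~ C: open and connected *)
  open [set z : R * R | Omega (slice J z.1 z.2)] ->
  connected [set z : R * R | Omega (slice J z.1 z.2)] ->
  (* symmetric with respect to the real axis *)
  (forall x y : R, Omega (slice J x y) -> Omega (slice J x (- y))) ->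
  (* Omega meets the real axis *)
  (exists x : R, Omega (qreal x)) ->
  (* f : Omega -> L_J is holomorphic *)
  (exists g : R * R -> R * R,
     holomorphic_on [set z : R * R | Omega (slice J z.1 z.2)] g /\
     forall z : R * R, Omega (slice J z.1 z.2) ->
       f (slice J z.1 z.2) = slice J (g z).1 (g z).2) ->
  Omega (slice J x0 y0) ->
  regular_ext J f (slice J x0 y0) = qzero R ->
  y0 != 0 ->
  ((forall L : quat R, imag_unit L -> regular_ext J f (slice L x0 y0) = qzero R)
   <-> (f (slice J x0 y0) = qzero R /\ f (slice J x0 (- y0)) = qzero R)).
Proof.
move=> HJ _ _ _ _ _ _ _ _ _; split.
- move=> vanish; split.
    by rewrite -(@regular_ext_agrees _ J f x0 y0 HJ); exact: vanish.
  rewrite -(@regular_ext_agrees _ J f x0 (- y0) HJ) -slice_oppr.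
  by apply: vanish; apply: imag_unit_opp.
- by move=> [fy fNy] L HL; exact: regular_ext_sphere_eq0.
Qed.
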